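(* Let $k\le n$ be positive integers. The set $\mathcal C_{n,k}$ (the neglex standard monomial basis of $S_{n,k}$) consists exactly of the monomials $x_1^{a_1}\cdots x_n^{a_n}$ whose exponent sequence $(a_1,\dots,a_n)$ is componentwise $\le$ some $(n,k)$-staircase.
   Context: $S_{n,k}=\mathbb F[x_1,\dots,x_n]/J_{n,k}$, where $J_{n,k}$ is generated by $h_k(x_1),h_k(x_1,x_2),\dots,h_k(x_1,\dots,x_n)$ (complete homogeneous symmetric polynomials) and $e_n,e_{n-1},\dots,e_{n-k+1}$ (elementary symmetric polynomials in $x_1,\dots,x_n$). For $S=\{s_1<\cdots<s_m\}\subseteq[n]$, $\mathbf x(S)^*=x_{n-s_1+1}^{s_1}x_{n-s_2+1}^{s_2-1}\cdots x_{n-s_m+1}^{s_m-m+1}$. $\mathcal C_{n,k}$ is the set of monomials $m$ with $x_i^k\nmid m$ for all $i$ and $\mathbf x(S)^*\nmid m$ for all $S\subseteq[n]$ with $|S|=n-k+1$. A shuffle of sequences $(a_1,\dots,a_r)$ and $(b_1,\dots,b_s)$ is an interleaving preserving the relative order of the $a$'s and of the $b$'s. An $(n,k)$-staircase is a shuffle of $(k-1,k-2,\dots,1,0)$ with the sequence $(k-1,\dots,k-1)$ consisting of $n-k$ copies of $k-1$. *)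

From mathcomp Require Import all_boot.
Set Implicit Arguments. Unset Strict Implicit. Unset Printing Implicit Defensive.

(* A monomial x_1^{a_1} ... x_n^{a_n} is represented by its exponent vector
   a : 'I_n -> nat; variable x_{i+1} corresponds to the ordinal i (0-based). *)
Definition monomial (n : nat) := 'I_n -> nat.

Definition mdiv (n : nat) (m1 m2 : monomial n) : Prop := forall i, m1 i <= m2 i.

(* S is given 0-based: the
   ordinal t stands for s = t+1.  The j-th smallest element s_j contributes the
   factor x_{n - s_j + 1}^{s_j - j + 1}; 0-based variable index n - s_j = n-1-t,
   i.e. t = rev_ord i, and j - 1 = #{u in S | u < t}. *)
Definition xSstar (n : nat) (S : {set 'I_n}) : monomial n :=
  fun i => if rev_ord i \in S
           then (rev_ord i).+1 - #|[set u in S | u < rev_ord i]|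
           else 0.

Definition Cnk (n k : nat) (m : monomial n) : Prop :=
  (forall i, ~~ (k <= m i))
  /\ (forall S : {set 'I_n}, #|S| = n - k + 1 -> ~ mdiv (xSstar S) m).

Definition shuffle (s u v : seq nat) : Prop :=
  exists b : bitseq, size b = size s /\ mask b s = u /\ mask (map negb b) s = v.

Definition staircase (n k : nat) (s : seq nat) : Prop :=
  shuffle s (rev (iota 0 k)) (nseq (n - k) k.-1).

From mathcomp Require Import all_boot zify.
Set Implicit Arguments. Unset Strict Implicit. Unset Printing Implicit Defensive.

(* Both sides are governed by one greedy statistic of the exponent sequence
   a = (a_1, ..., a_n), read from the right: the rank r of a suffix grows by one
   at position i exactly when a_i <= r(a_{i+1}, ..., a_n).

   Staircase side: a is dominated by a shuffle of (j-1, ..., 1, 0) with copies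
   of c >= j-1 iff every a_i <= c and the rank of a is at least j; the entries
   j-1, ..., 0 of the shuffle sit exactly at the positions where the rank grows.

   Divisibility side: in reversed coordinates, x(S)^* | m says that for every i
   in a set T, a_i exceeds the number of positions after i outside T. If
   |T| + rank > n, then T meets the set Q of rank-growth positions, and the last common point p gives
   a_p <= #(Q after p) <= #(non-T after p) < a_p; conversely the last t positions
   outside Q form such a T of any size t <= n - rank. For t = n - k + 1 this says
   that no x(S)^* with |S| = n - k + 1 divides m iff the rank is at least k. *)

Lemma size_shuffle s u v : shuffle s u v -> size s = size u + size v.
Proof.
case=> b [sz_b [<- <-]]; rewrite !size_mask ?size_map // -sz_b.
by elim: b {sz_b} => //= -[] b IHb /=; lia.
Qed.

Lemma shuffle_consP x s u v : shuffle (x :: s) u v ->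
  (exists2 u', u = x :: u' & shuffle s u' v) \/
  (exists2 v', v = x :: v' & shuffle s u v').
Proof.
case=> -[|[] b] [//= [sz_b] [<- <-]]; [left | right].
- by exists (mask b s) => //; exists b.
- by exists (mask (map negb b) s) => //; exists b.
Qed.

Lemma shuffle_consl x s u v : shuffle s u v -> shuffle (x :: s) (x :: u) v.
Proof. by case=> b [sz_b [<- <-]]; exists (true :: b); rewrite /= sz_b. Qed.

Lemma shuffle_consr x s u v : shuffle s u v -> shuffle (x :: s) u (x :: v).
Proof. by case=> b [sz_b [<- <-]]; exists (false :: b); rewrite /= sz_b. Qed.

Lemma rev_iotaS j : rev (iota 0 j.+1) = j :: rev (iota 0 j).
Proof. by rewrite -addn1 iotaD rev_cat. Qed.

Fixpoint stair_rank (a : seq nat) : nat :=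
  if a is x :: a' then stair_rank a' + (x <= stair_rank a') else 0.

Lemma stair_rank_size a : stair_rank a <= size a.
Proof. by elim: a => //= x a IHa; case: (x <= _) => /=; lia. Qed.

Definition below_shuffle c j r (a : seq nat) := exists s,
  shuffle s (rev (iota 0 j)) (nseq r c) /\
  forall i, i < size a -> nth 0 a i <= nth 0 s i.

Section BelowShuffle.
Variable c : nat.

Lemma below_shuffle_rank a j r : j <= c.+1 -> size a = j + r ->
  below_shuffle c j r a -> all (leq^~ c) a /\ j <= stair_rank a.
Proof.
elim: a j r => [|x a IHa] j r le_jc /= sz_a [s [sh_s le_as]]; first by split; lia.
have := size_shuffle sh_s; rewrite size_rev size_iota size_nseq -sz_a.
case: s sh_s le_as => // y s sh_s le_as _.
have le_xy : x <= y by apply: (le_as 0).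
have le_as' : forall i, i < size a -> nth 0 a i <= nth 0 s i.
  by move=> i; apply: (le_as i.+1).
case: (shuffle_consP sh_s) => [[u' eq_u sh_s'] | [v' eq_v sh_s']]; clear sh_s.
- case: j eq_u le_jc sz_a => [|j]; rewrite ?rev_iotaS // => -[eq_y eq_u'] le_jc [sz_a].
  subst y u'.
  have [-> le_j] := IHa j r (ltnW le_jc) sz_a (ex_intro _ s (conj sh_s' le_as')).
  by rewrite (leq_trans le_xy le_j) /=; lia.
- case: r eq_v sz_a => [|r] // -[eq_y eq_v'] sz_a; subst y v'.
  have /= [-> le_j] := IHa j r le_jc ltac:(lia) (ex_intro _ s (conj sh_s' le_as')).
  by rewrite le_xy /=; lia.
Qed.

Lemma rank_below_shuffle a j r : size a = j + r ->
  all (leq^~ c) a -> j <= stair_rank a -> below_shuffle c j r a.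
Proof.
elim: a j r => [|x a IHa] j r /= sz_a.
  have [-> ->] : j = 0 /\ r = 0 by lia.
  by move=> _ _; exists [::]; split=> //; exists [::].
case/andP=> le_xc all_a le_j.
have dom_cons y s : x <= y -> (forall i, i < size a -> nth 0 a i <= nth 0 s i) ->
    forall i, i < size (x :: a) -> nth 0 (x :: a) i <= nth 0 (y :: s) i.
  by move=> le_xy le_as [|i] //= /le_as.
case: (leqP j (stair_rank a)) => [le_ja | lt_aj].
- case: r sz_a => [|r] sz_a; first by have := stair_rank_size a; lia.
  have [s [sh_s le_as]] := IHa j r ltac:(lia) all_a le_ja.
  by exists (c :: s); split; [apply: shuffle_consr | apply: dom_cons].
- have le_xa : x <= stair_rank a by move: le_j; case: (x <= _) => /=; lia.
  have eq_j : j = (stair_rank a).+1 by move: le_j; rewrite le_xa /=; lia.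
  have [s [sh_s le_as]] := IHa (stair_rank a) r ltac:(lia) all_a (leqnn _).
  exists (stair_rank a :: s); split; last exact: dom_cons.
  by rewrite eq_j rev_iotaS; apply: shuffle_consl.
Qed.

End BelowShuffle.

Lemma downward_ind (P : nat -> Prop) n : (forall i, n <= i -> P i) ->
  (forall i, i < n -> P i.+1 -> P i) -> forall i, P i.
Proof.
move=> Pbig Pstep i; elim: {i}(n - i) {-2}i (leqnn (n - i)) => [|d IHd] i le_ni.
  by apply: Pbig; lia.
by case: (leqP n i) => [/Pbig // | lt_in]; apply: Pstep => //; apply: IHd; lia.
Qed.

Section CardFrom.
Variable n : nat.
Implicit Types (A : {set 'I_n}) (i : nat).

Definition card_from A i := #|[set j in A | i <= j]|.

Lemma card_from_oversize A i : n <= i -> card_from A i = 0.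
Proof.
move=> le_ni; apply: eq_card0 => j; rewrite !inE.
by apply/negbTE/andP=> -[_]; have := ltn_ord j; lia.
Qed.

Lemma card_fromS A i (lt_in : i < n) :
  card_from A i = (Ordinal lt_in \in A) + card_from A i.+1.
Proof.
rewrite /card_from (cardsD1 (Ordinal lt_in)) !inE leqnn andbT; congr (_ + _).
apply: eq_card => j; rewrite !inE -val_eqE /= ltn_neqAle eq_sym.
by case: (j \in A); rewrite ?andbF.
Qed.

Lemma card_from0 A : card_from A 0 = #|A|.
Proof. by apply: eq_card => j; rewrite !inE andbT. Qed.

Lemma card_fromC A i : card_from A i + card_from (~: A) i = n - i.
Proof.
move: i; apply: (@downward_ind _ n) => [i le_ni | i lt_in IHi].
  by rewrite !card_from_oversize //; lia.
by rewrite (card_fromS A lt_in) (card_fromS (~: A) lt_in) inE; case: (_ \in A) => /=; lia.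
Qed.
End CardFrom.

Section ExponentSequence.
Variables (n : nat) (m : monomial n).

Definition exponents := map m (enum 'I_n).

Lemma size_exponents : size exponents = n.
Proof. by rewrite size_map size_enum_ord. Qed.

Lemma nth_exponents i (lt_in : i < n) : nth 0 exponents i = m (Ordinal lt_in).
Proof.
by rewrite (nth_map (Ordinal lt_in)) ?size_enum_ord // (nth_ord_enum _ (Ordinal lt_in)).
Qed.

Lemma all_exponentsP (P : pred nat) : reflect (forall i, P (m i)) (all P exponents).
Proof.
apply: (iffP allP) => [P_m i | P_m _ /mapP[i _ ->] //].
exact/P_m/map_f/mem_enum.
Qed.

Lemma dominated_exponents (s : seq nat) :
  (forall i : 'I_n, m i <= nth 0 s i) <->
  (forall i, i < size exponents -> nth 0 exponents i <= nth 0 s i).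
Proof.
rewrite size_exponents; split=> [le_ms i lt_in | le_ms i].
  by rewrite nth_exponents.
by have := le_ms i (ltn_ord i); rewrite nth_exponents; congr (m _ <= _); apply: val_inj.
Qed.

Definition suffix_rank i := stair_rank (drop i exponents).

Lemma suffix_rankS i (lt_in : i < n) :
  suffix_rank i = suffix_rank i.+1 + (m (Ordinal lt_in) <= suffix_rank i.+1).
Proof. by rewrite /suffix_rank (drop_nth 0) ?size_exponents // nth_exponents. Qed.

Lemma suffix_rank0 : suffix_rank 0 = stair_rank exponents.
Proof. by rewrite /suffix_rank drop0. Qed.

Lemma suffix_rank_oversize i : n <= i -> suffix_rank i = 0.
Proof. by move=> le_ni; rewrite /suffix_rank drop_oversize // size_exponents. Qed.

Definition rank_steps : {set 'I_n} := [set j : 'I_n | m j <= suffix_rank j.+1].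

Lemma card_from_rank_steps i : card_from rank_steps i = suffix_rank i.
Proof.
move: i; apply: (@downward_ind _ n) => [i le_ni | i lt_in IHi].
  by rewrite card_from_oversize // suffix_rank_oversize.
by rewrite (card_fromS _ lt_in) (suffix_rankS lt_in) IHi inE addnC.
Qed.

Definition exceeds_gaps (T : {set 'I_n}) :=
  forall i : 'I_n, i \in T -> card_from (~: T) i.+1 < m i.

Lemma mdiv_xSstar S : mdiv (xSstar S) m <-> exceeds_gaps [set i | rev_ord i \in S].
Proof.
set T : {set 'I_n} := [set i | rev_ord i \in S].
have card_below (i : 'I_n) : #|[set u in S | u < rev_ord i]| = card_from T i.+1.
  rewrite /card_from -(card_preimset _ (@rev_ord_inj n)); apply: eq_card => j.
  rewrite !inE /=; have := ltn_ord i; have := ltn_ord j.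
  by case: (rev_ord j \in S) => //= lt_jn lt_in; apply/idP/idP; lia.
have gaps (i : 'I_n) : card_from T i.+1 + card_from (~: T) i.+1 = n - i.+1.
  exact: card_fromC.
rewrite /mdiv /xSstar /exceeds_gaps; split=> [div_m i | exc_m i].
- rewrite inE => Si; have := div_m i; rewrite Si card_below /=.
  by have := gaps i; have := ltn_ord i; lia.
- case Si: (rev_ord i \in S) => //; have := exc_m i; rewrite inE Si card_below /=.
  by have := gaps i; have := ltn_ord i; lia.
Qed.

Lemma exceeds_gaps_card T : exceeds_gaps T -> #|T| + suffix_rank 0 <= n.
Proof.
move=> exc_T; rewrite leqNgt; apply/negP => big_T.
have card_steps : #|rank_steps| = suffix_rank 0 by rewrite -card_from0 card_from_rank_steps.
have : 0 < #|rank_steps :&: T|.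
  have : #|rank_steps :|: T| <= n by rewrite -[n in _ <= n]card_ord max_card.
  rewrite -(ltn_add2l #|rank_steps :|: T|) addn0 cardsUI card_steps addnC.
  by move/leq_ltn_trans; apply.
case/card_gt0P=> p0 /(arg_maxnP val) [p /setIP[steps_p T_p] max_p].
have steps_after_p : card_from rank_steps p.+1 <= card_from (~: T) p.+1.
  apply/subset_leq_card/subsetP => j; rewrite !inE => /andP[steps_j lt_pj].
  rewrite lt_pj andbT; apply/negP => T_j.
  have : j \in rank_steps :&: T by rewrite !inE steps_j T_j.
  by move/max_p; rewrite /= leqNgt lt_pj.
move: steps_p; rewrite inE -card_from_rank_steps => le_mp.
by have := exc_T p T_p; lia.
Qed.

Lemma exists_exceeds_gaps t : t + suffix_rank 0 <= n ->
  exists T : {set 'I_n}, #|T| = t /\ exceeds_gaps T.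
Proof.
move=> le_tn.
pose T : {set 'I_n} :=
  [set i : 'I_n | (i \notin rank_steps) && (card_from (~: rank_steps) i <= t)].
have card_T i : card_from T i = minn (card_from (~: rank_steps) i) t.
  move: i; apply: (@downward_ind _ n) => [i le_ni | i lt_in IHi].
    by rewrite !card_from_oversize // min0n.
  rewrite (card_fromS T lt_in) IHi inE (card_fromS (~: rank_steps) lt_in) !inE.
  by case: (_ <= _) => /=; lia.
exists T; split.
  rewrite -card_from0 card_T; have := card_fromC rank_steps 0.
  by rewrite card_from_rank_steps; lia.
move=> i; rewrite inE => /andP[]; rewrite inE -ltnNge => lt_rank_m.
rewrite (card_fromS _ (ltn_ord i)) inE => le_t.
have := card_fromC T i.+1; have := card_fromC rank_steps i.+1.
by rewrite card_T card_from_rank_steps; have := ltn_ord i; lia.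
Qed.

Lemma no_xSstar_div t :
  (forall S : {set 'I_n}, #|S| = t -> ~ mdiv (xSstar S) m) <->
  n < t + stair_rank exponents.
Proof.
rewrite -suffix_rank0.
have card_rev (S : {set 'I_n}) : #|[set i | rev_ord i \in S]| = #|S|.
  exact/card_preimset/rev_ord_inj.
split=> [no_div | big_t S card_S /mdiv_xSstar/exceeds_gaps_card].
  rewrite ltnNge; apply/negP => /exists_exceeds_gaps[T [card_T exc_T]].
  apply: (no_div [set i | rev_ord i \in T]); first by rewrite card_rev.
  apply/mdiv_xSstar; suff -> : [set i | rev_ord i \in [set i | rev_ord i \in T]] = T by [].
  by apply/setP => i; rewrite !inE rev_ordK.
by rewrite card_rev card_S leqNgt big_t.
Qed.

End ExponentSequence.

Lemma Cnk_rank n k (m : monomial n) : k <= n ->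
  Cnk k m <-> (forall i, m i < k) /\ k <= stair_rank (exponents m).
Proof.
move=> le_kn; rewrite /Cnk no_xSstar_div.
have -> : (n < n - k + 1 + stair_rank (exponents m)) = (k <= stair_rank (exponents m)).
  by apply/idP/idP; lia.
by split=> -[lt_m ?]; split=> // i; have := lt_m i; rewrite ltnNge.
Qed.

Lemma staircase_dominated_rank n k (m : monomial n) : 0 < k -> k <= n ->
  (exists s, staircase n k s /\ forall i : 'I_n, m i <= nth 0 s i) <->
  (forall i, m i < k) /\ k <= stair_rank (exponents m).
Proof.
move=> k_gt0 le_kn.
have sz_exp : size (exponents m) = k + (n - k) by rewrite size_exponents; lia.
have le_kk : k <= k.-1.+1 by lia.
have m_lt i : (m i <= k.-1) = (m i < k) by lia.
have -> : (exists s, staircase n k s /\ forall i : 'I_n, m i <= nth 0 s i) <->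
    below_shuffle k.-1 k (n - k) (exponents m).
  by split=> -[s [stair_s dom_s]]; exists s; split=> //; apply/dominated_exponents.
split=> [/(below_shuffle_rank le_kk sz_exp)[/all_exponentsP le_m le_k] | [lt_m le_k]].
  by split=> // i; rewrite -m_lt.
by apply: rank_below_shuffle => //; apply/all_exponentsP => i; rewrite m_lt.
Qed.

Theorem mainTheorem5 (n k : nat) (hk : 0 < k) (hkn : k <= n) (m : monomial n) :
  Cnk k m <->
  exists s : seq nat, staircase n k s /\ (forall i : 'I_n, m i <= nth 0 s i).
Proof. by rewrite Cnk_rank // staircase_dominated_rank. Qed.
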